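(* Let $j\geq1$ be an integer and $0<e<1$. Let $n$ be a positive integer with $h_j(n)>n^{-e}$. Then for every prime $p$ and integer $m\geq1$ with $p^m\parallel n$ we have $h_j(p^m)\geq \frac{1}{M_{j,e}\,(p^m)^e}$. In particular, the set $\{n\in\mathbb{N}: h_j(n)>n^{-e}\}$ is finite.
   Context: $\sigma(n)=\sum_{d\mid n}d$. For an integer $j\geq1$, a prime $p$ and $m\geq1$, put $h_j(p^m)=\sum_{k=1}^{j}\binom{j}{k}\big(p\,\sigma(p^{m-1})\big)^{-k}$, set $h_j(1)=1$, and extend $h_j$ to all positive integers multiplicatively: $h_j(n)=\prod_{p^m\parallel n}h_j(p^m)$. For $0<e<1$ let $M_{j,e}=\max_{n\in\mathbb{Z}_{\geq1}}h_j(n)\,n^{e}$ (this maximum exists and satisfies $M_{j,e}\geq1$). *)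

From HB Require Import structures.
From mathcomp Require Import all_boot all_order all_algebra.
From mathcomp Require Import all_classical all_reals all_analysis.
Unset Printing Implicit Defensive.
Import Order.TTheory GRing.Theory Num.Theory.
Local Open Scope ring_scope.

Definition sigma (n : nat) : nat := (\sum_(d <- divisors n) d)%N.

Definition hpp (R : realType) (j p m : nat) : R :=
  \sum_(1 <= k < j.+1) ('C(j, k))%:R * (((p * sigma (p ^ m.-1))%N)%:R) ^- k.

Definition h (R : realType) (j n : nat) : R :=
  \prod_(p <- primes n) hpp R j p (logn p n).

(* M is M_{j,e} = max_{n >= 1} h_j(n) n^e : attained at some n0 >= 1 and an
   upper bound of all values. *)
Definition is_Mje (R : realType) (j : nat) (e M : R) : Prop :=
  (exists2 n0 : nat, (0 < n0)%N & M = h R j n0 * (n0%:R `^ e)) /\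
  (forall n : nat, (0 < n)%N -> h R j n * (n%:R `^ e) <= M).

From HB Require Import structures.
From mathcomp Require Import all_boot all_order all_algebra.
From mathcomp Require Import all_classical all_reals all_analysis.
From mathcomp Require Import ring lra.
Import Order.TTheory GRing.Theory Num.Theory.
Local Open Scope ring_scope.
Local Open Scope classical_set_scope.

(* Write n = p^m r with p not dividing r.  Multiplicativity and the definition
   of M give n^-e < h(n) = h(p^m) h(r) <= h(p^m) M r^-e, whence
   h(p^m) > 1 / (M (p^m)^e).  Since also h(p^m) <= (2^j - 1) / p^m, this bounds
   every prime-power component p^m of such an n by a constant K depending only
   on j, e and M; hence n divides K!, and there are finitely many such n. *)

Lemma leq_sigma n : (0 < n)%N -> (n <= sigma n)%N.
Proof.
move=> n_gt0; rewrite /sigma (bigD1_seq n) ?divisors_uniq ?divisors_id //=.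
exact: leq_addr.
Qed.

Lemma leq_pfactor_sigma p m : (0 < p)%N -> (0 < m)%N ->
  (p ^ m <= p * sigma (p ^ m.-1))%N.
Proof.
move=> p_gt0; case: m => // m _ /=.
by rewrite expnS leq_mul2l leq_sigma ?orbT // expn_gt0 p_gt0.
Qed.

Lemma hpp_ge0 (R : realType) j p m : 0 <= hpp R j p m.
Proof.
by apply: sumr_ge0 => k _; rewrite mulr_ge0 // invr_ge0 exprn_ge0.
Qed.

Lemma hpp_le (R : realType) j {p m : nat} : prime p -> (0 < m)%N ->
  hpp R j p m <= (\sum_(1 <= k < j.+1) 'C(j, k))%N%:R / ((p ^ m)%N)%:R.
Proof.
move=> p_pr m_gt0; rewrite /hpp natr_sum mulr_suml.
apply: ler_sum_nat => -[|k] // _; apply: ler_wpM2l => //.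
set q := (p * sigma (p ^ m.-1))%N.
have pm_le_q : (p ^ m <= q)%N by exact: leq_pfactor_sigma (prime_gt0 p_pr) m_gt0.
have pm_gt0 : (0 < p ^ m)%N by rewrite expn_gt0 prime_gt0.
have pm_le_qk : (p ^ m <= q ^ k.+1)%N.
  rewrite expnS; apply: (leq_trans pm_le_q).
  by rewrite leq_pmulr // expn_gt0 (leq_trans pm_gt0 pm_le_q).
by rewrite -natrX lef_pV2 ?posrE ?ltr0n ?ler_nat // (leq_trans pm_gt0).
Qed.

Lemma h1 (R : realType) j : h R j 1 = 1.
Proof. by rewrite /h big_nil. Qed.

Lemma h_split (R : realType) j {n p} : (0 < n)%N -> p \in primes n ->
  h R j n = hpp R j p (logn p n) * h R j n`_(negn p).
Proof.
move=> n_gt0 pn; have p_pr : prime p by move: pn; rewrite mem_primes => /andP[].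
rewrite /h (bigD1_seq p) ?primes_uniq //=; congr (_ * _).
rewrite primes_part big_filter; apply: eq_bigr => q qp; congr hpp.
rewrite -{1}(partnC p n_gt0) p_part lognM ?part_gt0 ?expn_gt0 ?prime_gt0 //.
by rewrite lognX (logn_prime q p_pr) (negbTE qp) muln0.
Qed.

Lemma Mje_ge1 {R : realType} {j : nat} {e M : R} : is_Mje R j e M -> 1 <= M.
Proof. by move=> [_ M_ub]; have := M_ub 1%N isT; rewrite h1 powR1 mulr1. Qed.

Lemma inv_lt_of_factor_bound {R : realType} {a b M H G : R} :
  G * b <= M -> (a * b)^-1 < H * G -> 0 < a -> 0 < b -> 0 <= H -> (M * a)^-1 < H.
Proof.
move=> GbM lt_HG a_gt0 b_gt0 H_ge0.
rewrite -[(a * b)^-1]mul1r ltr_pdivrMr ?mulr_gt0 // in lt_HG.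
have HG_gt0 : 0 < H * G.
  by rewrite -(pmulr_lgt0 _ (mulr_gt0 a_gt0 b_gt0)) (lt_trans ltr01).
have G_gt0 : 0 < G by nra.
have M_gt0 : 0 < M by apply: lt_le_trans GbM; rewrite mulr_gt0.
rewrite -[(M * a)^-1]mul1r ltr_pdivrMr ?mulr_gt0 //.
have := ler_wpM2r (mulr_ge0 H_ge0 (ltW a_gt0)) GbM; nra.
Qed.

Lemma le_powR_of_inv_le {R : realType} {e M D P : R} :
  0 < M -> 0 < e -> e < 1 -> 0 < P ->
  (M * P `^ e)^-1 <= D / P -> P <= (D * M) `^ (1 - e)^-1.
Proof.
move=> M_gt0 e_gt0 e_lt1 P_gt0 le_DP.
have Pe_gt0 : 0 < P `^ e by apply: powR_gt0.
rewrite -[(M * _)^-1]mul1r ler_pdivrMr ?mulr_gt0 // in le_DP.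
have P_le : P <= D * M * P `^ e.
  have -> : D * M * P `^ e = P * (D / P * (M * P `^ e)) by field; rewrite gt_eqF.
  by rewrite -[leLHS]mulr1 ler_wpM2l // ltW.
have P1e_le : P `^ (1 - e) <= D * M.
  have -> : P `^ (1 - e) = P / P `^ e.
    by rewrite powRB ?gt_eqF ?implybT // powRr1 ?ltW.
  by rewrite ler_pdivrMr.
have DM_ge0 : 0 <= D * M by apply: le_trans P1e_le; exact: powR_ge0.
have inv_ge0 : 0 <= (1 - e)^-1 by rewrite invr_ge0; lra.
have := ge0_ler_powR inv_ge0 (powR_ge0 _ _) DM_ge0 P1e_le.
have e1_neq0 : 1 - e != 0 by rewrite subr_eq0 gt_eqF.
by rewrite -powRrM (mulfV e1_neq0) powRr1 // ltW.
Qed.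

Lemma dvdn_fact_of_pfactor_leq n K : (0 < n)%N ->
  (forall p, p \in primes n -> p ^ logn p n <= K)%N -> (n %| K`!)%N.
Proof.
move=> n_gt0 pf_le; apply/dvdn_partP => // p /= pn.
rewrite p_part dvdn_fact // pf_le // andbT expn_gt0 prime_gt0 //.
by move: pn; rewrite mem_primes => /andP[].
Qed.

Lemma hpp_lower_bound {R : realType} {j : nat} {e M : R} {n p m : nat} :
  is_Mje R j e M -> (0 < n)%N -> n%:R `^ (- e) < h R j n -> prime p ->
  logn p n = m -> (0 < m)%N -> (M * ((p ^ m)%N)%:R `^ e)^-1 < hpp R j p m.
Proof.
move=> [_ M_ub] n_gt0 lt_h p_pr <- m_gt0.
have pn : p \in primes n by rewrite -logn_gt0.
have r_gt0 : (0 < n`_(negn p))%N by exact: part_gt0.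
rewrite (h_split R j n_gt0 pn) in lt_h.
rewrite -{1}(partnC p n_gt0) p_part natrM powRN powRM // in lt_h.
apply: (inv_lt_of_factor_bound (M_ub _ r_gt0) lt_h); rewrite ?hpp_ge0 //.
- by apply: powR_gt0; rewrite ltr0n expn_gt0 prime_gt0.
- by apply: powR_gt0; rewrite ltr0n.
Qed.

Theorem lemma5p2 (R : realType) (j : nat) (e M : R)
  (hj : (1 <= j)%N) (he0 : 0 < e) (he1 : e < 1) (hM : is_Mje R j e M) :
  (forall n : nat, (0 < n)%N -> n%:R `^ (- e) < h R j n ->
     forall p m : nat, prime p -> (1 <= m)%N -> logn p n = m ->
       (M * ((p ^ m)%N)%:R `^ e)^-1 <= hpp R j p m)
  /\ finite_set [set n : nat | (0 < n)%N /\ n%:R `^ (- e) < h R j n].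
Proof.
have M_gt0 : 0 < M := lt_le_trans ltr01 (Mje_ge1 hM).
split=> [n n_gt0 lt_h p m p_pr m_gt0 nm|].
  exact/ltW/(hpp_lower_bound hM n_gt0 lt_h p_pr nm).
set D := (\sum_(1 <= k < j.+1) 'C(j, k))%N.
set K := Num.truncn ((D%:R * M) `^ (1 - e)^-1).
apply: (sub_finite_set _ (finite_II K`!.+1)) => n [n_gt0 lt_h] /=.
rewrite ltnS dvdn_leq ?fact_gt0 // dvdn_fact_of_pfactor_leq // => p pn.
have p_pr : prime p by move: pn; rewrite mem_primes => /andP[].
have m_gt0 : (0 < logn p n)%N by rewrite logn_gt0.
rewrite truncn_ge_nat ?powR_ge0 // (le_powR_of_inv_le M_gt0) //.
- by rewrite ltr0n expn_gt0 prime_gt0.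
- apply: le_trans (hpp_le R j p_pr m_gt0).
  exact/ltW/(hpp_lower_bound hM n_gt0 lt_h p_pr erefl).
Qed.
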